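(* For every constant $\epsilon<1$ the following holds. There is no pair of maps $g_r,g_c$, where $g_r$ assigns to each row payoff matrix $R$ (entries in $[0,1]$) a mixed strategy over rows and $g_c$ assigns to each pair $(R,C)$ of payoff matrices a mixed strategy over columns, such that for every bimatrix game $(R,C)$ the profile $(g_r(R),g_c(R,C))$ is an $\epsilon$-well-supported Nash equilibrium. In other words, with unlimited one-way communication (from the row player to the column player) it is impossible to guarantee an $\epsilon$-well-supported Nash equilibrium for any constant $\epsilon<1$.
   Context: A bimatrix game $(R,C)$ has payoff matrices with entries in $[0,1]$; mixed strategies $\mathbf{x},\mathbf{y}$ are probability vectors over rows and columns. For a mixed strategy $\mathbf{y}$ of the column player, row $i$ is an $\epsilon$-best response if $\mathbf{e}_i^TR\mathbf{y}\ge\mathbf{e}_{i'}^TR\mathbf{y}-\epsilon$ for all rows $i'$; similarly for the column player with $C$. $(\mathbf{x},\mathbf{y})$ is an $\epsilon$-well-supported Nash equilibrium if every pure strategy in the support of $\mathbf{x}$ is an $\epsilon$-best response to $\mathbf{y}$ and every pure strategy in the support of $\mathbf{y}$ is an $\epsilon$-best response to $\mathbf{x}$. In one-way communication only the row player sends information, so his output depends only on $R$. *)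

From mathcomp Require Import all_boot all_order all_algebra.
From mathcomp Require Import reals.
Set Implicit Arguments. Unset Strict Implicit. Unset Printing Implicit Defensive.
Import Order.TTheory GRing.Theory Num.Theory.
Local Open Scope ring_scope.

Section Games.
Variable R : realType.

Definition payoff_matrix n m (A : 'M[R]_(n, m)) : Prop :=
  forall i j, 0 <= A i j /\ A i j <= 1.

Definition is_mixed n (x : 'I_n -> R) : Prop :=
  (forall i, 0 <= x i) /\ \sum_(i < n) x i = 1.

Definition row_payoff n m (A : 'M[R]_(n, m)) (y : 'I_m -> R) (i : 'I_n) : R :=
  \sum_(j < m) A i j * y j.

Definition col_payoff n m (B : 'M[R]_(n, m)) (x : 'I_n -> R) (j : 'I_m) : R :=
  \sum_(i < n) x i * B i j.

Definition row_eps_best_response n m (A : 'M[R]_(n, m)) (y : 'I_m -> R)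
  (eps : R) (i : 'I_n) : Prop :=
  forall i' : 'I_n, row_payoff A y i' - eps <= row_payoff A y i.

Definition col_eps_best_response n m (B : 'M[R]_(n, m)) (x : 'I_n -> R)
  (eps : R) (j : 'I_m) : Prop :=
  forall j' : 'I_m, col_payoff B x j' - eps <= col_payoff B x j.

Definition eps_WSNE n m (A B : 'M[R]_(n, m)) (x : 'I_n -> R) (y : 'I_m -> R)
  (eps : R) : Prop :=
  [/\ is_mixed x, is_mixed y,
      (forall i, 0 < x i -> row_eps_best_response A y eps i) &
      (forall j, 0 < y j -> col_eps_best_response B x eps j)].

End Games.

From mathcomp Require Import all_boot all_order all_algebra.
From mathcomp Require Import reals.
Import Order.TTheory GRing.Theory Num.Theory.
Local Open Scope ring_scope.

(* Let the row matrix be the 2x2 identity and let i be a row played with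
   positive probability.  Since the row player's strategy cannot depend on C,
   the column player may be given the payoff C = [column <> i] in every row;
   for eps < 1 she must then put all weight on the other column j.  But
   against column j, row i earns 0 while row j earns 1, so row i is not an
   eps-best response, although it is in the support. *)

Section WellSupported.
Context {R : realType}.
Implicit Types (n m : nat).

Lemma payoff_matrix_bool {n m} (b : 'I_n -> 'I_m -> bool) :
  payoff_matrix (\matrix_(i, j) (b i j)%:R : 'M[R]_(n, m)).
Proof. by move=> i j; rewrite mxE; case: (b i j); rewrite ?lexx ?ler01. Qed.

Lemma mixed_exists_pos {n} {x : 'I_n -> R} : is_mixed x -> exists i, 0 < x i.
Proof.
case=> x_ge0 sum_x; apply/existsP; apply: contraT; rewrite negb_exists.
move=> /forallP x_le0; move: sum_x; rewrite big1 => [/eqP|i _].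
  by rewrite eq_sym oner_eq0.
by apply/eqP; rewrite eq_le x_ge0 andbT leNgt x_le0.
Qed.

Lemma col_payoff_rows_equal n m (f : 'I_m -> R) (x : 'I_n -> R) j :
  is_mixed x -> col_payoff (\matrix_(i, k) f k) x j = f j.
Proof.
case=> _ sum_x; rewrite /col_payoff.
under eq_bigr => i _ do rewrite mxE.
by rewrite -big_distrl /= sum_x mul1r.
Qed.

Lemma row_payoff_id n (y : 'I_n -> R) i :
  row_payoff (\matrix_(i', j) (i' == j)%:R) y i = y i.
Proof.
rewrite /row_payoff (bigD1 i) //= big1 => [|j /negbTE ij].
  by rewrite mxE eqxx mul1r addr0.
by rewrite mxE eq_sym ij mul0r.
Qed.

Section Support.
Context {n m : nat} {A B : 'M[R]_(n, m)} {x : 'I_n -> R} {y : 'I_m -> R}.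
Context {eps : R}.
Hypothesis wsne : eps_WSNE A B x y eps.

Lemma WSNE_row_support i i' :
  row_payoff A y i + eps < row_payoff A y i' -> x i = 0.
Proof.
case: wsne => [[x_ge0 _] _ row_br _] worse.
apply/eqP; rewrite eq_le x_ge0 andbT leNgt; apply/negP => /row_br/(_ i').
by rewrite lerBlDr leNgt worse.
Qed.

Lemma WSNE_col_support j j' :
  col_payoff B x j + eps < col_payoff B x j' -> y j = 0.
Proof.
case: wsne => [_ [y_ge0 _] _ col_br] worse.
apply/eqP; rewrite eq_le y_ge0 andbT leNgt; apply/negP => /col_br/(_ j').
by rewrite lerBlDr leNgt worse.
Qed.

End Support.

Lemma sum_ord2 (f : 'I_2 -> R) {i j : 'I_2} : i != j -> \sum_(k < 2) f k = f i + f j.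
Proof.
rewrite big_ord_recl big_ord1.
by case: i j => [[|[|//]] ?] [[|[|//]] ?] //= _; [|rewrite addrC];
  congr (f _ + f _); apply: val_inj.
Qed.

Lemma mixed2_other {y : 'I_2 -> R} {i j : 'I_2} :
  is_mixed y -> i != j -> y i = 0 -> y j = 1.
Proof. by case=> _ + ij yi0; rewrite (sum_ord2 _ ij) yi0 add0r. Qed.

End WellSupported.

Theorem theorem4 (R : realType) (eps : R) :
  eps < 1 ->
  ~ exists (g_r : forall n m : nat, 'M[R]_(n, m) -> 'I_n -> R)
           (g_c : forall n m : nat, 'M[R]_(n, m) -> 'M[R]_(n, m) -> 'I_m -> R),
      forall (n m : nat) (A B : 'M[R]_(n, m)),
        (0 < n)%N -> (0 < m)%N ->
        payoff_matrix A -> payoff_matrix B ->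
        eps_WSNE A B (g_r n m A) (g_c n m A B) eps.
Proof.
move=> eps_lt1 [gr [gc wsne]].
pose A : 'M[R]_2 := \matrix_(i, j) (i == j)%:R.
have pA : payoff_matrix A by apply: payoff_matrix_bool.
have [x_mixed _ _ _] := wsne 2 2 A A isT isT pA pA.
have [i xi_gt0] := mixed_exists_pos x_mixed.
pose j : 'I_2 := if i == ord0 then ord_max else ord0.
have ij : i != j by rewrite /j; case: ifP => [/eqP->|/negbT].
pose B : 'M[R]_2 := \matrix_(_, k) (k != i)%:R.
have WB := wsne 2 2 A B isT isT pA (payoff_matrix_bool _).
have [_ y_mixed _ _] := WB.
have yi0 : gc 2 2 A B i = 0.
  apply: (WSNE_col_support WB i j).
  by rewrite !col_payoff_rows_equal // eqxx eq_sym ij add0r.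
have yj1 := mixed2_other y_mixed ij yi0.
have xi0 : gr 2 2 A i = 0.
  by apply: (WSNE_row_support WB i j); rewrite !row_payoff_id yi0 yj1 add0r.
by move: xi_gt0; rewrite xi0 ltxx.
Qed.
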